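(* Let $k,l$ be positive integers and let $\widehat{\mathfrak{G}}_{k,l}$ be the groupoid defined below. Then $\widehat{\mathfrak{G}}_{k,l}$ is (isomorphic to) the action groupoid $\mathrm{Gr}_{k,l}\rtimes\mathrm{PU}(kl)$ associated with the action of $\mathrm{PU}(kl)$ on $\mathrm{Gr}_{k,l}$ (by automorphisms of $M_{kl}(\mathbb{C})$ moving subalgebras).
   Context: $\mathrm{Gr}_{k,l}$ is the space of unital $*$-subalgebras of $M_{kl}(\mathbb{C})$ isomorphic to $M_k(\mathbb{C})$. For $\alpha\in\mathrm{Gr}_{k,l}$ write $M_{k,\alpha}$ for the subalgebra and $M_{l,\alpha}\cong M_l(\mathbb{C})$ for its centralizer in $M_{kl}(\mathbb{C})$. The topological groupoid $\widehat{\mathfrak{G}}_{k,l}$ has object space $\mathrm{Gr}_{k,l}$, and a morphism from $\alpha$ to $\beta$ is a pair $(\lambda,\mu)$ of $*$-isomorphisms $\lambda\colon M_{k,\alpha}\to M_{k,\beta}$, $\mu\colon M_{l,\alpha}\to M_{l,\beta}$, with the natural topology. The action groupoid of a group $G$ acting on $Y$ has objects $Y$ and morphisms $G\times Y$, with $s(g,y)=y$, $t(g,y)=gy$. *)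

From HB Require Import structures.
From mathcomp Require Import all_boot all_order all_algebra.
From mathcomp Require Import all_classical all_reals topology normedtype.
From mathcomp Require Import complex.
Import Order.TTheory GRing.Theory Num.Theory.
Import numFieldTopology.Exports numFieldNormedType.Exports.
Set Implicit Arguments.
Unset Strict Implicit.
Unset Printing Implicit Defensive.
Local Open Scope classical_set_scope.
Local Open Scope ring_scope.

(** The complex numbers are modelled as R[i] for R : realType (any realType is
    the real line up to isomorphism), with its norm (modulus) topology. *)
Definition Cx (R : realType) : numClosedFieldType := R[i].

Definition adjmx (C : numClosedFieldType) (m p : nat) (x : 'M[C]_(m, p)) : 'M[C]_(p, m) :=
  (map_mx Num.conj x)^T.

(** Linear endomorphisms of M_n(C) are represented by matrices E of size
    (n*n) x (n*n) acting on the vectorisation: x |-> vec_mx (mxvec x *m E).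
    Thus app (E1 *m E2) = app E2 \o app E1. *)
Definition app (C : numClosedFieldType) (n : nat) (E : 'M[C]_(n * n)) (x : 'M[C]_n) : 'M[C]_n :=
  vec_mx (mxvec x *m E).

Definition is_unital_star_subalgebra (C : numClosedFieldType) (n : nat) (A : set 'M[C]_n) : Prop :=
  [/\ A 1%:M,
      (forall x y, A x -> A y -> A (x + y)),
      (forall (c : C) x, A x -> A (c *: x)),
      (forall x y, A x -> A y -> A (x *m y)) &
      (forall x, A x -> A (adjmx x))].

Definition is_star_iso (C : numClosedFieldType) (m n : nat)
  (A : set 'M[C]_m) (B : set 'M[C]_n) (f : 'M[C]_m -> 'M[C]_n) : Prop :=
  [/\ set_bij A B f,
      (forall x y, A x -> A y -> f (x + y) = f x + f y),
      (forall (c : C) x, A x -> f (c *: x) = c *: f x),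
      (forall x y, A x -> A y -> f (x *m y) = f x *m f y) &
      (forall x, A x -> f (adjmx x) = adjmx (f x))].

Definition centralizer (C : numClosedFieldType) (n : nat) (A : set 'M[C]_n) : set 'M[C]_n :=
  [set y | forall x, A x -> x *m y = y *m x].

Definition hs (C : numClosedFieldType) (n : nat) (x y : 'M[C]_n) : C := \tr (adjmx x *m y).

Definition is_orth_proj (C : numClosedFieldType) (n : nat) (A : set 'M[C]_n) (P : 'M[C]_(n * n)) : Prop :=
  (forall x, A (app P x)) /\ (forall x y, A y -> hs (x - app P x) y = 0).

Definition orth_proj (C : numClosedFieldType) (n : nat) (A : set 'M[C]_n) : 'M[C]_(n * n) :=
  xget 0 (is_orth_proj A).

(** The space of subalgebras with its natural (Grassmannian) topology: the
    initial topology of alpha |-> orthogonal projection onto alpha. *)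
Definition Obj (R : realType) (n : nat) := initial_topology (@orth_proj (Cx R) n).
Arguments Obj : clear implicits.

Definition Gr (R : realType) (k l : nat) : set (Obj R (k * l)) :=
  [set A : set 'M[Cx R]_(k * l) | is_unital_star_subalgebra A /\
           exists f : 'M[Cx R]_k -> 'M[Cx R]_(k * l), is_star_iso setT A f].

Arguments Gr : clear implicits.

(** PU(n), realised faithfully as the group {Ad u | u in U(n)} of (inner)
    automorphisms of M_n(C), with the topology of End(M_n(C)).  The group law
    g * h (first h, then g) is the matrix product h *m g. *)
Definition PU (R : realType) (n : nat) : set 'M[Cx R]_(n * n) :=
  [set g | exists u : 'M[Cx R]_n,
     [/\ u *m adjmx u = 1%:M, adjmx u *m u = 1%:M &
         forall x, app g x = u *m x *m adjmx u]].

Arguments PU : clear implicits.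

Definition pu_mul (C : numClosedFieldType) (n : nat) (g h : 'M[C]_(n * n)) : 'M[C]_(n * n) :=
  h *m g.

Definition pu_act (R : realType) (n : nat) (g : 'M[Cx R]_(n * n)) (A : Obj R n) : Obj R n :=
  app g @` (A : set 'M[Cx R]_n).

(** A morphism alpha -> beta is recorded as
    (alpha, beta, L, M) where the *-isomorphism lambda : M_{k,alpha} -> M_{k,beta}
    is app L restricted to alpha, and mu : M_{l,alpha} -> M_{l,beta} is app M
    restricted to the centralizer of alpha.  To make the representation
    unique, L (resp. M) is normalised to vanish on the orthogonal complement
    of alpha (resp. of its centralizer), i.e. L = lambda o P_alpha.  The
    topology is the product topology (natural topology). *)
Definition MorT (R : realType) (n : nat) :=
  (Obj R n * Obj R n * 'M[Cx R]_(n * n) * 'M[Cx R]_(n * n))%type.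
Arguments MorT : clear implicits.

Definition mor_src (R : realType) (n : nat) (m : MorT R n) : Obj R n := m.1.1.1.
Definition mor_tgt (R : realType) (n : nat) (m : MorT R n) : Obj R n := m.1.1.2.

Definition HatMor (R : realType) (k l : nat) : set (MorT R (k * l)) :=
  [set m | let: (A, B, L, M) := m in
     [/\ Gr R k l A, Gr R k l B,
         is_star_iso A B (app L),
         is_star_iso (centralizer A) (centralizer B) (app M) &
         (forall x, app L x = app L (app (orth_proj A) x)) /\
         (forall x, app M x = app M (app (orth_proj (centralizer A)) x))]].

Arguments HatMor : clear implicits.

(** composition in hat-G: m2 o m1 (first m1 : alpha -> beta, then m2 : beta -> gamma) *)
Definition hat_comp (R : realType) (n : nat) (m2 m1 : MorT R n) : MorT R n :=
  (mor_src m1, mor_tgt m2, m1.1.2 *m m2.1.2, m1.2 *m m2.2).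

(** A unital *-subalgebra [A] of [M_(k*l)] isomorphic to [M_k] is the span of a
    system of [k x k] matrix units [e i j], and every [x] decomposes uniquely as
    [x = \sum_(i, j) e i j * x_ij] with [x_ij] in the centralizer [A'], i.e.
    [M_(k*l) = A ⊗ A'].  Hence a morphism [(lambda, mu)] of the groupoid glues to
    the *-automorphism [lambda ⊗ mu] of [M_(k*l)], which is inner, [Ad u] with [u]
    unitary, because any system of [n x n] matrix units in [M_n] is unitarily
    conjugate to the standard one; conversely [Ad u] restricts to such a pair.
    For continuity, everything is expressed through the orthogonal projection
    [P] onto [A] alone: for bilinear [F],
    [\sum_(i, j) F (e i j) (e j i) = l * \sum_(a, b) F (P E_ab) (P E_ab)^*]
    ([E_ab] the standard matrix units of [M_(k*l)]),
    which turns [lambda ⊗ mu], the projection onto [A'] and the projection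
    onto [u A u^*] into polynomial expressions in [P], [u], [lambda] and [mu]. *)

From HB Require Import structures.
From mathcomp Require Import all_boot all_order all_algebra.
From mathcomp Require Import all_classical all_reals topology normedtype.
From mathcomp Require Import complex.
Import Order.TTheory GRing.Theory Num.Theory.
Import numFieldTopology.Exports numFieldNormedType.Exports.
Local Open Scope classical_set_scope.
Local Open Scope ring_scope.
Set Implicit Arguments.
Unset Strict Implicit.
Unset Printing Implicit Defensive.

Section Adjoint.
Variable C : numClosedFieldType.

Lemma adjmxE m p (x : 'M[C]_(m, p)) i j : adjmx x i j = (x j i)^*.
Proof. by rewrite !mxE. Qed.

Fact adjmx_is_zmod_morphism m p : zmod_morphism (@adjmx C m p).
Proof. by move=> x y; apply/matrixP => i j; rewrite !mxE rmorphB. Qed.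

HB.instance Definition _ m p :=
  GRing.isZmodMorphism.Build _ _ (@adjmx C m p) (@adjmx_is_zmod_morphism m p).

Lemma adjmxK m p (x : 'M[C]_(m, p)) : adjmx (adjmx x) = x.
Proof. by apply/matrixP => i j; rewrite !adjmxE conjCK. Qed.

Lemma adjmxZ m p c (x : 'M[C]_(m, p)) : adjmx (c *: x) = c^* *: adjmx x.
Proof. by apply/matrixP => i j; rewrite !mxE rmorphM. Qed.

Lemma adjmxM m p q (x : 'M[C]_(m, p)) (y : 'M[C]_(p, q)) :
  adjmx (x *m y) = adjmx y *m adjmx x.
Proof. by rewrite /adjmx map_mxM trmx_mul. Qed.

Lemma adjmx_delta m p (i : 'I_m) (j : 'I_p) : adjmx (delta_mx i j : 'M[C]_(m, p)) = delta_mx j i.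
Proof. by rewrite /adjmx map_delta_mx trmx_delta. Qed.

End Adjoint.

Section LinearMaps.
Variables (C : numClosedFieldType) (n : nat).
Local Notation M := 'M[C]_n.
Local Notation E := 'M[C]_(n * n).

Fact app_is_linear (P : E) : linear (app P).
Proof. by move=> c x y; rewrite /app linearP /= mulmxDl -scalemxAl linearP. Qed.

HB.instance Definition _ (P : E) :=
  GRing.isLinear.Build C M M _ (app P) (app_is_linear P).

Lemma app_mulmx (P Q : E) x : app (P *m Q) x = app Q (app P x).
Proof. by rewrite /app vec_mxK mulmxA. Qed.

Lemma app_inj (P Q : E) : app P =1 app Q -> P = Q.
Proof.
move=> PQ; apply/row_matrixP => i.
by have := PQ (vec_mx (delta_mx 0 i)); rewrite /app vec_mxK !rowE => /(can_inj vec_mxK).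
Qed.

Lemma app_lin_mx (f : {linear M -> M}) : app (lin_mx f) =1 f.
Proof. exact: mx_vec_lin. Qed.

Lemma hsE (x y : M) : hs x y = \sum_a \sum_b (x a b)^* * y a b.
Proof.
rewrite /hs /mxtrace exchange_big; apply: eq_bigr => b _; rewrite mxE.
by apply: eq_bigr => a _; rewrite adjmxE.
Qed.

Lemma hsC (x y : M) : hs y x = (hs x y)^*.
Proof.
rewrite !hsE !rmorph_sum; apply: eq_bigr => a _; rewrite rmorph_sum.
by apply: eq_bigr => b _; rewrite rmorphM /= conjCK mulrC.
Qed.

Fact hs_is_linear (x : M) : linear (hs x).
Proof. by move=> c y z; rewrite /hs mulmxDr -scalemxAr mxtraceD mxtraceZ. Qed.

HB.instance Definition _ (x : M) :=
  GRing.isLinear.Build C M C _ (hs x) (hs_is_linear x).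

Lemma hs_suml I r (P : pred I) (F : I -> M) z :
  hs (\sum_(i <- r | P i) F i) z = \sum_(i <- r | P i) hs (F i) z.
Proof.
rewrite hsC linear_sum rmorph_sum; apply: eq_bigr => i _.
by rewrite [RHS]hsC.
Qed.

Lemma hsBl (x y z : M) : hs (x - y) z = hs x z - hs y z.
Proof. by rewrite hsC linearB rmorphB /= -!hsC. Qed.

Lemma hsZl c (x z : M) : hs (c *: x) z = c^* * hs x z.
Proof. by rewrite hsC linearZ rmorphM /= -hsC. Qed.

Lemma hs_delta (x : M) a b : hs x (delta_mx a b) = (x a b)^*.
Proof.
rewrite hsE (bigD1 a) //= [X in _ + X]big1 ?addr0 => [|a' /negbTE a'a]; last first.
  by apply: big1 => b' _; rewrite mxE a'a mulr0.
rewrite (bigD1 b) //= [X in _ + X]big1 ?addr0 => [|b' /negbTE b'b]; last first.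
  by rewrite mxE b'b andbF mulr0.
by rewrite mxE !eqxx mulr1.
Qed.

Lemma hs_eq0 (x : M) : hs x x = 0 -> x = 0.
Proof.
rewrite hsE => hx; apply/matrixP => a b; rewrite mxE.
have sq_ge0 i j : 0 <= (x i j)^* * x i j by rewrite mulrC mul_conjC_ge0.
have row0 := psumr_eq0P (fun i _ => sumr_ge0 _ (fun j _ => sq_ge0 i j)) hx (i := a) isT.
have /eqP := psumr_eq0P (fun j _ => sq_ge0 a j) row0 (i := b) isT.
by rewrite mulrC mul_conjC_eq0 => /eqP.
Qed.

Section OrthProj.
Variable A : set M.
Hypothesis subA : forall x y, A x -> A y -> A (x - y).

Lemma orth_proj_fix (P : E) y : is_orth_proj A P -> A y -> app P y = y.
Proof.
move=> [PA orthPA] Ay; have /orthPA/hs_eq0/eqP : A (y - app P y) by apply: subA.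
by rewrite subr_eq0 => /eqP.
Qed.

Lemma orth_projE (P : E) : is_orth_proj A P -> orth_proj A = P.
Proof.
move=> hP; rewrite /orth_proj; apply: xget_unique => // Q [QA orthQA].
have [PA orthPA] := hP; apply: app_inj => x.
set d := app Q x - app P x.
have Ad : A d by apply: subA.
have dE : d = (x - app P x) - (x - app Q x) by rewrite opprB [RHS]addrC addrA subrK.
have /hs_eq0/eqP : hs d d = 0 by rewrite {1}dE hsBl orthPA // orthQA // subrr.
by rewrite subr_eq0 => /eqP.
Qed.

End OrthProj.

End LinearMaps.

Lemma sum_if_eq (V : nmodType) (I : finType) (p : I) (F : I -> V) :
  \sum_i (if i == p then F i else 0) = F p.
Proof. by rewrite -big_mkcond big_pred1_eq. Qed.

Lemma subalgebraB (C : numClosedFieldType) n (A : set 'M[C]_n) :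
  is_unital_star_subalgebra A -> forall x y, A x -> A y -> A (x - y).
Proof. by case=> _ AD AZ _ _ x y Ax Ay; rewrite -scaleN1r; apply/AD/AZ. Qed.

Lemma centralizer_subalgebra (C : numClosedFieldType) n (A : set 'M[C]_n) :
  (forall z, A z -> A (adjmx z)) -> is_unital_star_subalgebra (centralizer A).
Proof.
move=> adjA; split=> [z _|x y Cx Cy z Az|c x Cx z Az|x y Cx Cy z Az|x Cx z Az].
- by rewrite mulmx1 mul1mx.
- by rewrite mulmxDr mulmxDl Cx // Cy.
- by rewrite -scalemxAl -scalemxAr Cx.
- by rewrite mulmxA Cx // -!mulmxA Cy.
- apply: (can_inj (@adjmxK _ _ _)).
  by rewrite !adjmxM adjmxK (Cx _ (adjA _ Az)).
Qed.

Definition matrix_units (C : numClosedFieldType) k n (e : 'I_k -> 'I_k -> 'M[C]_n) :=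
  [/\ forall i j p q, e i j *m e p q = if j == p then e i q else 0,
      \sum_i e i i = 1%:M & forall i j, adjmx (e i j) = e j i].

Definition units_hom (C : numClosedFieldType) k n (e : 'I_k -> 'I_k -> 'M[C]_n)
  (c : 'M[C]_k) : 'M[C]_n := \sum_i \sum_j c i j *: e i j.

Section MatrixUnits.
Variables (C : numClosedFieldType) (k l : nat).
Hypotheses (k_gt0 : (0 < k)%N) (l_gt0 : (0 < l)%N).
Local Notation n := (k * l)%N.
Local Notation M := 'M[C]_n.
Variable e : 'I_k -> 'I_k -> M.
Hypothesis units_e : matrix_units e.

Let unitsM i j p q : e i j *m e p q = if j == p then e i q else 0.
Proof. by case: units_e. Qed.
Let units_sum1 : \sum_i e i i = 1%:M.
Proof. by case: units_e. Qed.
Let units_adj i j : adjmx (e i j) = e j i.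
Proof. by case: units_e. Qed.

Let unitsMl m (x : 'M[C]_(m, n)) i j p q :
  x *m e i j *m e p q = if j == p then x *m e i q else 0.
Proof. by rewrite -mulmxA unitsM; case: eqP; rewrite ?mulmx0. Qed.

Let k_neq0 : (k%:R : C) != 0.
Proof. by rewrite pnatr_eq0 -lt0n. Qed.
Let l_neq0 : (l%:R : C) != 0.
Proof. by rewrite pnatr_eq0 -lt0n. Qed.

Lemma mxtrace_units i j : \tr (e i j) = if i == j then l%:R else 0.
Proof.
have tr_diag t : \tr (e t t) = \tr (e i i).
  by have := unitsM t i i t; rewrite eqxx => <-; rewrite mxtrace_mulC unitsM eqxx.
case: eqP => [<-|/eqP ij]; last first.
  have := unitsM i i i j; rewrite eqxx => <-.
  by rewrite mxtrace_mulC unitsM eq_sym (negbTE ij) mxtrace0.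
have : \sum_t \tr (e t t) = (k * l)%:R by rewrite -raddf_sum units_sum1 /= mxtrace1.
under eq_bigr do rewrite tr_diag.
by rewrite sumr_const card_ord natrM -[_ *+ k]mulr_natl => /(mulfI k_neq0).
Qed.

Lemma hs_units i j p q : hs (e i j) (e p q) = if (i == p) && (j == q) then l%:R else 0.
Proof.
rewrite /hs units_adj unitsM eq_sym; case: (p == i); rewrite ?mxtrace0 //.
by rewrite mxtrace_units.
Qed.

Local Notation f := (units_hom e).

Fact units_hom_is_linear : linear f.
Proof.
move=> c x y; rewrite /units_hom scaler_sumr -big_split; apply: eq_bigr => i _.
rewrite scaler_sumr -big_split; apply: eq_bigr => j _.
by rewrite !mxE scalerDl scalerA.
Qed.

HB.instance Definition _ := GRing.isLinear.Build C 'M[C]_k M _ f units_hom_is_linear.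

Lemma units_hom_delta p q : f (delta_mx p q) = e p q.
Proof.
rewrite /units_hom (bigD1 p) //= [X in _ + X]big1 ?addr0 => [|i /negbTE ip]; last first.
  by apply: big1 => j _; rewrite mxE ip scale0r.
rewrite (bigD1 q) //= [X in _ + X]big1 ?addr0 => [|j /negbTE jq]; last first.
  by rewrite mxE jq andbF scale0r.
by rewrite mxE !eqxx scale1r.
Qed.

Lemma units_in_range i j : range f (e i j).
Proof. by exists (delta_mx i j); rewrite ?units_hom_delta. Qed.

Lemma hs_units_hom c p q : hs (e p q) (f c) = c p q * l%:R.
Proof.
rewrite linear_sum (bigD1 p) //= [X in _ + X]big1 ?addr0 => [|i ip]; last first.
  by rewrite linear_sum big1 // => j _; rewrite linearZ /= hs_units eq_sym (negbTE ip) scaler0.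
rewrite linear_sum (bigD1 q) //= [X in _ + X]big1 ?addr0 => [|j jq]; last first.
  by rewrite linearZ /= hs_units [q == j]eq_sym (negbTE jq) andbF scaler0.
by rewrite linearZ /= hs_units !eqxx.
Qed.

Lemma units_hom_inj : injective f.
Proof.
move=> c c' /(congr1 (hs (e _ _))) cc'; apply/matrixP => p q.
by have := cc' p q; rewrite !hs_units_hom => /(mulIf l_neq0).
Qed.

Lemma units_mulmx_hom i j c : e i j *m f c = \sum_q c j q *: e i q.
Proof.
rewrite mulmx_sumr -(sum_if_eq j (fun p => \sum_q c p q *: e i q)).
apply: eq_bigr => p _.
rewrite mulmx_sumr; case: eqP => [->|/eqP pj].
  by apply: eq_bigr => q _; rewrite -scalemxAr unitsM eqxx.
by apply: big1 => q _; rewrite -scalemxAr unitsM eq_sym (negbTE pj) scaler0.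
Qed.

Lemma units_homM c c' : f (c *m c') = f c *m f c'.
Proof.
rewrite /units_hom mulmx_suml; apply: eq_bigr => i _.
rewrite mulmx_suml; under [RHS]eq_bigr do rewrite -scalemxAl units_mulmx_hom scaler_sumr.
rewrite exchange_big; apply: eq_bigr => q _.
by rewrite mxE scaler_suml; apply: eq_bigr => j _; rewrite scalerA.
Qed.

Lemma units_hom_adj c : f (adjmx c) = adjmx (f c).
Proof.
rewrite /units_hom raddf_sum [LHS]exchange_big; apply: eq_bigr => i _.
rewrite raddf_sum; apply: eq_bigr => j _.
by rewrite /= adjmxZ units_adj adjmxE.
Qed.

Lemma units_hom1 : f 1%:M = 1%:M.
Proof.
by rewrite mx1_sum_delta linear_sum /=; under eq_bigr do rewrite units_hom_delta.
Qed.

Lemma units_hom_star_iso : is_star_iso setT (range f) f.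
Proof.
split=> [|x y _ _|c x _|x y _ _|x _]; rewrite ?linearD ?linearZ ?units_homM ?units_hom_adj //.
split=> [x _|x y _ _|y [x _ <-]]; [by exists x|exact: units_hom_inj|by exists x].
Qed.

Lemma range_units_subalgebra : is_unital_star_subalgebra (range f).
Proof.
split.
- by exists 1%:M; rewrite ?units_hom1.
- by move=> _ _ [x _ <-] [y _ <-]; exists (x + y); rewrite ?linearD.
- by move=> c _ [x _ <-]; exists (c *: x); rewrite ?linearZ.
- by move=> _ _ [x _ <-] [y _ <-]; exists (x *m y); rewrite ?units_homM.
- by move=> _ [x _ <-]; exists (adjmx x); rewrite ?units_hom_adj.
Qed.

Definition alg_coord (x : M) : 'M[C]_k := \matrix_(i, j) (l%:R^-1 * hs (e i j) x).

Fact units_coord_is_linear : linear alg_coord.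
Proof.
by move=> c x y; apply/matrixP => i j; rewrite !mxE linearP /= mulrDr mulrCA.
Qed.

HB.instance Definition _ :=
  GRing.isLinear.Build C M 'M[C]_k _ alg_coord units_coord_is_linear.

Definition proj_alg := f \o alg_coord.

Lemma hs_proj_alg x p q : hs (e p q) (proj_alg x) = hs (e p q) x.
Proof. by rewrite /= hs_units_hom mxE mulrAC mulVf ?mul1r. Qed.

Lemma is_orth_proj_alg : is_orth_proj (range f) (lin_mx proj_alg).
Proof.
split=> [x|x _ [c _ <-]]; rewrite app_lin_mx; first by exists (alg_coord x).
rewrite linear_sum big1 // => i _; rewrite linear_sum big1 // => j _.
by rewrite linearZ /= hsC linearB /= hs_proj_alg subrr conjC0 scaler0.
Qed.

Lemma orth_proj_alg : orth_proj (range f) = lin_mx proj_alg.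
Proof.
by apply: orth_projE is_orth_proj_alg; apply: subalgebraB range_units_subalgebra.
Qed.

Lemma centralizer_unitsP y :
  centralizer (range f) y <-> forall i j, e i j *m y = y *m e i j.
Proof.
split=> [Cy i j|Cy _ [c _ <-]]; first exact/Cy/units_in_range.
rewrite mulmx_suml mulmx_sumr; apply: eq_bigr => i _.
rewrite mulmx_suml mulmx_sumr; apply: eq_bigr => j _.
by rewrite -scalemxAl -scalemxAr Cy.
Qed.

Definition proj_centralizer (x : M) : M := k%:R^-1 *: \sum_i \sum_j e i j *m x *m e j i.

Fact proj_centralizer_is_linear : linear proj_centralizer.
Proof.
move=> c x y; rewrite /proj_centralizer scalerA mulrC -scalerA -scalerDr; congr (_ *: _).
rewrite scaler_sumr -big_split; apply: eq_bigr => i _.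
rewrite scaler_sumr -big_split; apply: eq_bigr => j _.
by rewrite mulmxDr mulmxDl -scalemxAr -scalemxAl.
Qed.

HB.instance Definition _ :=
  GRing.isLinear.Build C M M _ proj_centralizer proj_centralizer_is_linear.

Lemma proj_centralizer_in x : centralizer (range f) (proj_centralizer x).
Proof.
apply/centralizer_unitsP => p q; rewrite /proj_centralizer -scalemxAl -scalemxAr; congr (_ *: _).
rewrite mulmx_sumr mulmx_suml; transitivity (\sum_j e p j *m x *m e j q).
  rewrite -(sum_if_eq q (fun i => \sum_j e p j *m x *m e j i)).
  apply: eq_bigr => i _; rewrite mulmx_sumr; case: eqP => [->|/eqP iq].
    by apply: eq_bigr => j _; rewrite !mulmxA unitsM eqxx.
  by apply: big1 => j _; rewrite !mulmxA unitsM eq_sym (negbTE iq) !mul0mx.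
rewrite -(sum_if_eq p (fun i => \sum_j e i j *m x *m e j q)).
apply: eq_bigr => i _; rewrite mulmx_suml; case: eqP => [->|/eqP ip].
  by apply: eq_bigr => j _; rewrite unitsMl eqxx.
by symmetry; apply: big1 => j _; rewrite unitsMl (negbTE ip).
Qed.

Lemma is_orth_proj_centralizer : is_orth_proj (centralizer (range f)) (lin_mx proj_centralizer).
Proof.
split=> [x|x z /centralizer_unitsP Cz]; rewrite app_lin_mx; first exact: proj_centralizer_in.
apply/eqP; rewrite hsBl subr_eq0; apply/eqP.
have hs_conj i j : hs (e i j *m x *m e j i) z = \tr (e j j *m (adjmx x *m z)).
  rewrite /hs !adjmxM !units_adj !mulmxA -(mulmxA _ (e j i) z) Cz !mulmxA.
  by rewrite mxtrace_mulC !mulmxA unitsM eqxx.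
rewrite /proj_centralizer hsZl hs_suml (eq_bigr (fun=> hs x z)) => [|i _]; last first.
  rewrite hs_suml (eq_bigr _ (fun j _ => hs_conj i j)) -raddf_sum /=.
  by rewrite -mulmx_suml units_sum1 mul1mx.
by rewrite sumr_const card_ord fmorphV /= conjC_nat -[hs x z *+ k]mulr_natl mulKf.
Qed.

Lemma centralizer_units_subalgebra : is_unital_star_subalgebra (centralizer (range f)).
Proof. by apply: centralizer_subalgebra; have [] := range_units_subalgebra. Qed.

Lemma orth_proj_centralizer : orth_proj (centralizer (range f)) = lin_mx proj_centralizer.
Proof. exact/(orth_projE (subalgebraB centralizer_units_subalgebra))/is_orth_proj_centralizer. Qed.

Lemma orth_proj_algP : is_orth_proj (range f) (orth_proj (range f)).
Proof. by rewrite orth_proj_alg; apply: is_orth_proj_alg. Qed.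

Lemma orth_proj_centralizerP :
  is_orth_proj (centralizer (range f)) (orth_proj (centralizer (range f))).
Proof. by rewrite orth_proj_centralizer; apply: is_orth_proj_centralizer. Qed.

Lemma orth_proj_alg_fix y : range f y -> app (orth_proj (range f)) y = y.
Proof.
exact/(orth_proj_fix (subalgebraB range_units_subalgebra))/orth_proj_algP.
Qed.

Lemma orth_proj_centralizer_fix y :
  centralizer (range f) y -> app (orth_proj (centralizer (range f))) y = y.
Proof.
exact/(orth_proj_fix (subalgebraB centralizer_units_subalgebra))/orth_proj_centralizerP.
Qed.

(* [units_coef i j x] is the coefficient [x_ij] in [x = \sum_(i, j) e i j * x_ij]. *)
Definition units_coef i j (x : M) : M := \sum_m e m i *m x *m e j m.

Fact units_coef_is_linear i j : linear (units_coef i j).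
Proof.
move=> c x y; rewrite /units_coef scaler_sumr -big_split; apply: eq_bigr => m _.
by rewrite mulmxDr mulmxDl -scalemxAr -scalemxAl.
Qed.

HB.instance Definition _ i j :=
  GRing.isLinear.Build C M M _ (units_coef i j) (units_coef_is_linear i j).

Lemma units_mulmx_coef i j p q x : e p q *m units_coef i j x = e p i *m x *m e j q.
Proof.
rewrite mulmx_sumr -(sum_if_eq q (fun m => e p i *m x *m e j m)); apply: eq_bigr => m _.
by rewrite !mulmxA unitsM eq_sym; case: eqP => [->|]; rewrite ?mul0mx.
Qed.

Lemma coef_mulmx_units i j p q x : units_coef i j x *m e p q = e p i *m x *m e j q.
Proof.
rewrite mulmx_suml -(sum_if_eq p (fun m => e m i *m x *m e j q)); apply: eq_bigr => m _.
by rewrite unitsMl; case: eqP => [->|].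
Qed.

Lemma units_coef_centralizer i j x : centralizer (range f) (units_coef i j x).
Proof.
by apply/centralizer_unitsP => p q; rewrite units_mulmx_coef coef_mulmx_units.
Qed.

Lemma sum_units_coef x : \sum_i \sum_j e i j *m units_coef i j x = x.
Proof.
under eq_bigr do under eq_bigr do rewrite units_mulmx_coef.
under eq_bigr do rewrite -mulmx_sumr units_sum1 mulmx1.
by rewrite -mulmx_suml units_sum1 mul1mx.
Qed.

Lemma units_coefM i j x y :
  units_coef i j (x *m y) = \sum_p units_coef i p x *m units_coef p j y.
Proof.
transitivity (\sum_p \sum_m e m i *m x *m e p p *m y *m e j m).
  rewrite exchange_big; apply: eq_bigr => m _.
  by rewrite -!mulmx_suml -mulmx_sumr units_sum1 mulmx1 !mulmxA.
apply: eq_bigr => p _; rewrite {2}/units_coef mulmx_suml; apply: eq_bigr => m _.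
by rewrite -[RHS]mulmxA units_mulmx_coef !mulmxA.
Qed.

Lemma units_coef_adj i j x : units_coef i j (adjmx x) = adjmx (units_coef j i x).
Proof.
rewrite /units_coef raddf_sum; apply: eq_bigr => m _.
by rewrite /= !adjmxM !units_adj !mulmxA.
Qed.

Lemma units_coef_units i j p q :
  units_coef i j (e p q) = if (i == p) && (j == q) then 1%:M else 0.
Proof.
rewrite /units_coef; case: (i =P p) => [<-|/eqP ip] /=; last first.
  by rewrite big1 // => m _; rewrite unitsM (negbTE ip) mul0mx.
case: (j =P q) => [<-|/eqP jq].
  by under eq_bigr do rewrite unitsM eqxx unitsM eqxx; rewrite units_sum1.
by rewrite big1 // => m _; rewrite unitsM eqxx unitsM eq_sym (negbTE jq).
Qed.

Lemma units_coef_id i j z :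
  centralizer (range f) z -> units_coef i j z = if i == j then z else 0.
Proof.
move/centralizer_unitsP => Cz; rewrite /units_coef.
under eq_bigr do rewrite Cz -mulmxA unitsM.
case: eqP => _; last by rewrite big1 // => m _; rewrite mulmx0.
by rewrite -mulmx_sumr units_sum1 mulmx1.
Qed.

Lemma proj_centralizer_units i j x :
  proj_centralizer (e j i *m x) = k%:R^-1 *: units_coef i j x.
Proof.
rewrite /proj_centralizer /units_coef; congr (_ *: _); apply: eq_bigr => p _.
rewrite -(sum_if_eq j (fun q => e p i *m x *m e q p)); apply: eq_bigr => q _.
by rewrite !mulmxA unitsM; case: eqP => [->|]; rewrite ?mul0mx.
Qed.

Lemma app_orth_proj_delta a b :
  app (orth_proj (range f)) (delta_mx a b) =
  \sum_(Y : 'I_k * 'I_k) (l%:R^-1 * (e Y.1 Y.2 a b)^*) *: e Y.1 Y.2.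
Proof.
rewrite orth_proj_alg app_lin_mx /= /units_hom pair_bigA; apply: eq_bigr => -[i j] _.
by rewrite mxE hs_delta.
Qed.

(* The matrix units disappear from the right-hand side: only the projection onto
   [range f] remains, and it depends continuously on the subalgebra. *)
Lemma sum_bilinear_units (V : lmodType C) (F : M -> M -> V) :
  (forall z, linear (F ^~ z)) -> (forall y, linear (F y)) ->
  \sum_i \sum_j F (e i j) (e j i) =
  l%:R *: \sum_a \sum_b F (app (orth_proj (range f)) (delta_mx a b))
                          (adjmx (app (orth_proj (range f)) (delta_mx a b))).
Proof.
move=> Fl Fr; pose P := app (orth_proj (range f)).
pose Fl' z : {linear M -> V} := HB.pack (F^~ z) (GRing.isLinear.Build _ _ _ _ _ (Fl z)).
pose Fr' y : {linear M -> V} := HB.pack (F y) (GRing.isLinear.Build _ _ _ _ _ (Fr y)).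
have Fsuml z I r (G : I -> M) : F (\sum_(i <- r) G i) z = \sum_(i <- r) F (G i) z.
  exact: (linear_sum (Fl' z)).
have Fsumr y I r (G : I -> M) : F y (\sum_(i <- r) G i) = \sum_(i <- r) F y (G i).
  exact: (linear_sum (Fr' y)).
have FZl z c y : F (c *: y) z = c *: F y z by exact: (linearZZ (Fl' z)).
have FZr y c z : F y (c *: z) = c *: F y z by exact: (linearZZ (Fr' y)).
have expand a b : F (P (delta_mx a b)) (adjmx (P (delta_mx a b))) =
    \sum_(Y : 'I_k * 'I_k) \sum_(Z : 'I_k * 'I_k)
      ((l%:R^-1 * (e Y.1 Y.2 a b)^*) * (l%:R^-1 * e Z.1 Z.2 a b)) *: F (e Y.1 Y.2) (e Z.2 Z.1).
  rewrite /P app_orth_proj_delta raddf_sum Fsuml; apply: eq_bigr => Y _.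
  rewrite FZl Fsumr scaler_sumr; apply: eq_bigr => Z _.
  by rewrite /= adjmxZ units_adj FZr scalerA rmorphM /= fmorphV /= conjC_nat conjCK.
have coef Y Z : \sum_(X : 'I_n * 'I_n)
    (l%:R^-1 * (e Y.1 Y.2 X.1 X.2)^*) * (l%:R^-1 * e Z.1 Z.2 X.1 X.2) =
    if Z == Y then l%:R^-1 else 0.
  transitivity (l%:R^-1 * l%:R^-1 * hs (e Y.1 Y.2) (e Z.1 Z.2)).
    by rewrite hsE pair_bigA mulr_sumr; apply: eq_bigr => X _; rewrite mulrACA.
  rewrite hs_units; case: Y Z => [i j] [p q]; rewrite xpair_eqE /= [p == i]eq_sym [q == j]eq_sym.
  by case: ifP; rewrite ?mulr0 // -mulrA mulVf ?mulr1.
have -> : \sum_a \sum_b F (P (delta_mx a b)) (adjmx (P (delta_mx a b))) =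
    \sum_(Y : 'I_k * 'I_k) \sum_(Z : 'I_k * 'I_k)
      (if Z == Y then l%:R^-1 else 0) *: F (e Y.1 Y.2) (e Z.2 Z.1).
  under eq_bigr do under eq_bigr do rewrite expand.
  rewrite pair_bigA exchange_big; apply: eq_bigr => Y _.
  by rewrite exchange_big; apply: eq_bigr => Z _; rewrite -scaler_suml coef.
rewrite (eq_bigr (fun Y => l%:R^-1 *: F (e Y.1 Y.2) (e Y.2 Y.1))) => [|Y _]; last first.
  rewrite -(sum_if_eq Y (fun Z => l%:R^-1 *: F (e Y.1 Y.2) (e Z.2 Z.1))).
  by apply: eq_bigr => Z _; case: eqP => [->|]; rewrite ?scale0r.
by rewrite -scaler_sumr scalerA mulfV // scale1r pair_bigA.
Qed.

End MatrixUnits.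

Section StarHom.
Variable C : numClosedFieldType.

Lemma star_iso1 m p (A : set 'M[C]_m) (B : set 'M[C]_p) g :
  is_star_iso A B g -> A 1%:M -> B 1%:M -> g 1%:M = 1%:M.
Proof.
case=> [[_ _ gA] _ _ gM _] A1 /gA[a Aa ga].
by rewrite -ga -{1}(mul1mx a) gM // ga mulmx1.
Qed.

Lemma star_hom_units k n (g : {linear 'M[C]_k -> 'M[C]_n}) :
  {morph g : x y / x *m y} -> g 1%:M = 1%:M -> {morph g : x / adjmx x} ->
  matrix_units (fun i j => g (delta_mx i j)).
Proof.
move=> gM g1 gadj; split=> [i j p q||i j].
- rewrite -gM mul_delta_mx_cond.
  by case: eqP => _; rewrite ?mulr1n // mulr0n linear0.
- by rewrite -linear_sum -mx1_sum_delta.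
- by rewrite -gadj adjmx_delta.
Qed.

Lemma linear_units_hom k n (g : {linear 'M[C]_k -> 'M[C]_n}) :
  g =1 units_hom (fun i j => g (delta_mx i j)).
Proof.
move=> c; rewrite {1}(matrix_sum_delta c) linear_sum; apply: eq_bigr => i _.
by rewrite linear_sum; apply: eq_bigr => j _; rewrite linearZ.
Qed.

Lemma star_iso_units k n (A : set 'M[C]_n) (g : 'M[C]_k -> 'M[C]_n) :
  A 1%:M -> is_star_iso setT A g ->
  matrix_units (fun i j => g (delta_mx i j)) /\
  A = range (units_hom (fun i j => g (delta_mx i j))).
Proof.
move=> A1 iso_g; have [[gfun _ gA] gD gZ gM gadj] := iso_g.
have g_lin : linear g by move=> c x y; rewrite gD ?gZ.
pose g' : {linear 'M[C]_k -> 'M[C]_n} := HB.pack g (GRing.isLinear.Build _ _ _ _ g g_lin).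
split.
  apply: (star_hom_units (g := g')) => [x y||x]; first exact: gM.
    exact: star_iso1 iso_g I A1.
  exact: gadj.
rewrite -(funext (linear_units_hom g')).
apply/seteqP; split=> [_ /gA[c _ <-]|_ [c _ <-]]; [by exists c|exact: gfun].
Qed.

End StarHom.

Section Unitary.
Variables (C : numClosedFieldType) (n : nat).
Local Notation M := 'M[C]_n.

Definition ad (u x : M) : M := u *m x *m adjmx u.

Fact ad_is_linear u : linear (ad u).
Proof. by move=> c x y; rewrite /ad mulmxDr mulmxDl -scalemxAr -scalemxAl. Qed.

HB.instance Definition _ u := GRing.isLinear.Build C M M _ (ad u) (ad_is_linear u).

Variable u : M.
Hypotheses (uu' : u *m adjmx u = 1%:M) (u'u : adjmx u *m u = 1%:M).

Lemma adM x y : ad u (x *m y) = ad u x *m ad u y.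
Proof. by rewrite /ad !mulmxA -[u *m x *m adjmx u *m u]mulmxA u'u mulmx1. Qed.

Lemma ad_adj x : ad u (adjmx x) = adjmx (ad u x).
Proof. by rewrite /ad !adjmxM adjmxK !mulmxA. Qed.

Lemma ad1 : ad u 1%:M = 1%:M.
Proof. by rewrite /ad mulmx1. Qed.

Lemma adK : cancel (ad u) (ad (adjmx u)).
Proof. by move=> x; rewrite /ad adjmxK !mulmxA u'u mul1mx -mulmxA u'u mulmx1. Qed.

Lemma adKV : cancel (ad (adjmx u)) (ad u).
Proof. by move=> x; rewrite /ad adjmxK !mulmxA uu' mul1mx -mulmxA uu' mulmx1. Qed.

Lemma ad_centralizer (A : set M) : ad u @` centralizer A = centralizer (ad u @` A).
Proof.
apply/seteqP; split=> [_ [x Cx <-] _ [a Aa <-]|y Cy]; first by rewrite -!adM Cx.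
exists (ad (adjmx u) y); last exact: adKV.
move=> a Aa; apply: (can_inj adK).
by rewrite [LHS]adM [RHS]adM adKV Cy //; exists a.
Qed.

Lemma ad_star_iso (A : set M) g : is_unital_star_subalgebra A ->
  (forall a, A a -> g a = ad u a) -> is_star_iso A (ad u @` A) g.
Proof.
case=> _ AD AZ AM Aadj gE; split.
- split=> [a Aa|a b /set_mem Aa /set_mem Ab|_ [a Aa <-]]; last 2 first.
  + by rewrite !gE // => /(can_inj adK).
  + by exists a; rewrite ?gE.
  + by exists a; rewrite ?gE.
- by move=> x y Ax Ay; rewrite !gE ?linearD //; apply: AD.
- by move=> c x Ax; rewrite !gE ?linearZ //; apply: AZ.
- by move=> x y Ax Ay; rewrite !gE ?adM //; apply: AM.
- by move=> x Ax; rewrite !gE ?ad_adj //; apply: Aadj.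
Qed.

Section Transport.
Variables (k : nat) (e : 'I_k -> 'I_k -> M).

Lemma ad_units : matrix_units e -> matrix_units (fun i j => ad u (e i j)).
Proof.
case=> eM e1 eadj; split=> [i j p q||i j]; first by rewrite -adM eM; case: eqP; rewrite ?linear0.
  by rewrite -linear_sum /= e1 ad1.
by rewrite -ad_adj eadj.
Qed.

Lemma ad_range_units :
  ad u @` range (units_hom e) = range (units_hom (fun i j => ad u (e i j))).
Proof.
rewrite image_comp; apply: eq_imagel => c _ /=.
rewrite linear_sum; apply: eq_bigr => i _.
by rewrite linear_sum; apply: eq_bigr => j _; rewrite linearZ.
Qed.

End Transport.

End Unitary.

Lemma cV_normalize (C : numClosedFieldType) n (y : 'cV[C]_n) :
  y != 0 -> exists t : C, adjmx (t *: y) *m (t *: y) = 1%:M.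
Proof.
move=> y_neq0; pose s := (adjmx y *m y) 0 0.
have sE : s = \sum_i `|y i 0| ^+ 2.
  by rewrite /s mxE; apply: eq_bigr => i _; rewrite adjmxE mulrC -normCK.
have s_ge0 : 0 <= s by rewrite sE sumr_ge0 // => i _; rewrite exprn_ge0.
have s_neq0 : s != 0.
  apply: contra y_neq0; rewrite sE => /eqP s0; apply/eqP/matrixP => i j.
  have /eqP := psumr_eq0P (fun i _ => exprn_ge0 2 (normr_ge0 (y i 0))) s0 (i := i) isT.
  by rewrite (ord1 j) mxE sqrf_eq0 normr_eq0 => /eqP.
exists (sqrtC s)^-1; rewrite adjmxZ -scalemxAl -scalemxAr scalerA [adjmx y *m y]mx11_scalar.
rewrite -/s scale_scalar_mx fmorphV /= geC0_conj ?sqrtC_ge0 // -invfM -expr2 sqrtCK.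
by rewrite mulVf.
Qed.

Section UnitsConj.
Variables (C : numClosedFieldType) (n : nat).
Local Notation M := 'M[C]_n.
Variable f : 'I_n -> 'I_n -> M.
Hypothesis units_f : matrix_units f.

Lemma units_diag_neq0 a : f a a != 0.
Proof.
have [fM f1 _] := units_f; apply/eqP => faa0.
have fbb b : f b b = 0.
  have := fM b a a b; rewrite eqxx => <-.
  by have := fM b a a a; rewrite eqxx => <-; rewrite faa0 mulmx0 mul0mx.
have /matrixP/(_ a a)/eqP := f1; rewrite big1 // !mxE eqxx eq_sym.
by rewrite oner_eq0.
Qed.

Lemma units_unit_vector a : exists v : 'cV[C]_n, adjmx v *m v = 1%:M /\ f a a *m v = v.
Proof.
have [fM _ _] := units_f.
have /existsP[[r c] /= farc] : [exists rc : 'I_n * 'I_n, f a a rc.1 rc.2 != 0].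
  apply: contraR (units_diag_neq0 a) => /existsPn fa0; apply/eqP/matrixP => i j.
  by rewrite mxE; apply/eqP; have := fa0 (i, j); rewrite negbK.
pose y := f a a *m delta_mx c (0 : 'I_1).
have y_neq0 : y != 0.
  by apply: contra farc => /eqP/matrixP/(_ r 0); rewrite /y -colE !mxE => ->.
have [t vN] := cV_normalize y_neq0.
by exists (t *: y); split => //; rewrite -scalemxAr /y mulmxA fM eqxx.
Qed.

Lemma units_unitary_conj : (0 < n)%N ->
  exists u : M, [/\ u *m adjmx u = 1%:M, adjmx u *m u = 1%:M &
                    forall a b, f a b = ad u (delta_mx a b)].
Proof.
move=> n_gt0; pose a0 := Ordinal n_gt0; have [fM _ fadj] := units_f.
have [v [vN fv]] := units_unit_vector a0.
pose w a : M := v *m delta_mx 0 a.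
have fw a : f a0 a0 *m w a = w a by rewrite mulmxA fv.
have ww a : adjmx (w a) *m w a = delta_mx a a.
  by rewrite adjmxM adjmx_delta mulmxA -(mulmxA _ _ v) vN mulmx1 mul_delta_mx.
(* The [a]-th column of [u] is [f a a0 *m v]; these columns are orthonormal. *)
pose u := \sum_a f a a0 *m w a.
have u'u : adjmx u *m u = 1%:M.
  rewrite /u [adjmx _]raddf_sum /= mulmx_suml mx1_sum_delta; apply: eq_bigr => a _.
  rewrite -ww mulmx_sumr -(sum_if_eq a (fun b => adjmx (w a) *m w b)).
  apply: eq_bigr => b _; rewrite /= adjmxM fadj !mulmxA -(mulmxA _ (f a0 a)) fM eq_sym.
  by case: eqP => [->|_]; rewrite ?mulmx0 ?mul0mx // -(mulmxA _ (f a0 a0) v) fv.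
have uu' : u *m adjmx u = 1%:M by apply: mulmx1C.
have u_delta a b : u *m delta_mx a b = f a b *m u.
  transitivity (f a a0 *m w b).
    rewrite mulmx_suml -(sum_if_eq a (fun d => f d a0 *m w b)); apply: eq_bigr => d _.
    rewrite -!mulmxA mul_delta_mx_cond.
    by case: eqP => [->|_]; rewrite ?mulr1n // mulr0n !mulmx0.
  rewrite mulmx_sumr -(sum_if_eq b (fun d => f a a0 *m w d)); apply: eq_bigr => d _.
  rewrite mulmxA fM; case: (b =P d) => [->|/eqP bd]; first by rewrite eqxx.
  by rewrite eq_sym (negbTE bd) mul0mx.
by exists u; split=> // a b; rewrite /ad u_delta -mulmxA uu' mulmx1.
Qed.

End UnitsConj.

Lemma inner_star_aut (C : numClosedFieldType) n (g : {linear 'M[C]_n -> 'M[C]_n}) :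
  (0 < n)%N -> {morph g : x y / x *m y} -> g 1%:M = 1%:M -> {morph g : x / adjmx x} ->
  exists u : 'M[C]_n, [/\ u *m adjmx u = 1%:M, adjmx u *m u = 1%:M & g =1 ad u].
Proof.
move=> n_gt0 gM g1 gadj.
have [u [uu' u'u gE]] := units_unitary_conj (star_hom_units gM g1 gadj) n_gt0.
exists u; split=> // x; rewrite (linear_units_hom g) (linear_units_hom (ad u)).
by congr units_hom; apply/funext => a; apply/funext => b; apply: gE.
Qed.

(* The basis-free form of [tensor_map] (see [recon_autE]), with [P] the projection
   onto the source algebra and [L], [Mm] the two components of a morphism. *)
Definition recon_aut (C : numClosedFieldType) n (P L Mm : 'M[C]_(n * n)) (x : 'M[C]_n) : 'M[C]_n :=
  n%:R *: \sum_a \sum_b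
    app L (app P (delta_mx a b)) *m app Mm (adjmx (app P (delta_mx a b)) *m x).

Fact recon_aut_is_linear (C : numClosedFieldType) n (P L Mm : 'M[C]_(n * n)) :
  linear (recon_aut P L Mm).
Proof.
move=> c x y; rewrite /recon_aut scalerA mulrC -scalerA -scalerDr; congr (_ *: _).
rewrite scaler_sumr -big_split; apply: eq_bigr => a _.
rewrite scaler_sumr -big_split; apply: eq_bigr => b _.
by rewrite mulmxDr -scalemxAr linearP mulmxDr -scalemxAr.
Qed.

HB.instance Definition _ (C : numClosedFieldType) n (P L Mm : 'M[C]_(n * n)) :=
  GRing.isLinear.Build C _ _ _ (recon_aut P L Mm) (recon_aut_is_linear P L Mm).

Section Reconstruction.
Variables (C : numClosedFieldType) (k l : nat).
Hypotheses (k_gt0 : (0 < k)%N) (l_gt0 : (0 < l)%N).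
Local Notation n := (k * l)%N.
Local Notation M := 'M[C]_n.
Local Notation E := 'M[C]_(n * n).
Variable e : 'I_k -> 'I_k -> M.
Hypothesis units_e : matrix_units e.
Local Notation A := (range (units_hom e)).
Variables (B : set M) (L Mm : E).
Hypotheses (B1 : B 1%:M) (iso_L : is_star_iso A B (app L)).
Hypothesis iso_M : is_star_iso (centralizer A) (centralizer B) (app Mm).
Hypothesis Mm_proj : app Mm =1 app Mm \o app (orth_proj (centralizer A)).

Local Notation lam := (app L).
Local Notation mu := (app Mm).

Let unitsM : forall i j p q, e i j *m e p q = if j == p then e i q else 0.
Proof. by case: units_e. Qed.

Let A_units i j : A (e i j).
Proof. exact: units_in_range. Qed.

Let lamM a b : A a -> A b -> lam (a *m b) = lam a *m lam b.
Proof. by case: iso_L => _ _ _ + _; apply. Qed.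

Let muM a b : centralizer A a -> centralizer A b -> mu (a *m b) = mu a *m mu b.
Proof. by case: iso_M => _ _ _ + _; apply. Qed.

Let units_sum1 : \sum_i e i i = 1%:M.
Proof. by case: units_e. Qed.

Let units_adj i j : adjmx (e i j) = e j i.
Proof. by case: units_e. Qed.

Let A1 : A 1%:M.
Proof. by case: (range_units_subalgebra units_e). Qed.

Let lam1 : lam 1%:M = 1%:M.
Proof. exact: star_iso1 iso_L A1 B1. Qed.

Let mu1 : mu 1%:M = 1%:M.
Proof. by apply: star_iso1 iso_M _ _ => z _; rewrite mulmx1 mul1mx. Qed.

Lemma lam_mu_comm a z : A a -> centralizer A z -> lam a *m mu z = mu z *m lam a.
Proof.
case: iso_L => [[lamB _ _] _ _ _ _]; case: iso_M => [[muB _ _] _ _ _ _] Aa Cz.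
exact: muB _ Cz _ (lamB _ Aa).
Qed.

Definition tensor_map (x : M) : M := \sum_i \sum_j lam (e i j) *m mu (units_coef e i j x).

Fact tensor_map_is_linear : linear tensor_map.
Proof.
move=> c x y; rewrite /tensor_map scaler_sumr -big_split; apply: eq_bigr => i _.
rewrite scaler_sumr -big_split; apply: eq_bigr => j _.
by rewrite !linearP.
Qed.

HB.instance Definition _ := GRing.isLinear.Build C M M _ tensor_map tensor_map_is_linear.

Lemma tensor_mapM x y : tensor_map (x *m y) = tensor_map x *m tensor_map y.
Proof.
have C_coef i j z : centralizer A (units_coef e i j z) by apply: units_coef_centralizer.
have term i j p q :
    lam (e i j) *m mu (units_coef e i j x) *m (lam (e p q) *m mu (units_coef e p q y)) =
    if j == p then lam (e i q) *m mu (units_coef e i j x *m units_coef e p q y) else 0.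
  rewrite -mulmxA [mu _ *m _]mulmxA -lam_mu_comm // !mulmxA -lamM // -mulmxA -muM //.
  by rewrite unitsM; case: eqP; rewrite ?linear0 ?mul0mx.
rewrite /tensor_map mulmx_suml; apply: eq_bigr => i _.
under eq_bigr do rewrite (units_coefM units_e) linear_sum mulmx_sumr.
rewrite exchange_big mulmx_suml; apply: eq_bigr => j _.
rewrite mulmx_sumr.
rewrite -(sum_if_eq j (fun p =>
  \sum_q lam (e i q) *m mu (units_coef e i j x *m units_coef e p q y))).
apply: eq_bigr => p _; rewrite mulmx_sumr; case: eqP => [->|/eqP pj].
  by apply: eq_bigr => q _; rewrite term eqxx.
by symmetry; apply: big1 => q _; rewrite term eq_sym (negbTE pj).
Qed.

Lemma tensor_map_adj x : tensor_map (adjmx x) = adjmx (tensor_map x).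
Proof.
have [_ _ _ _ lam_adj] := iso_L; have [_ _ _ _ mu_adj] := iso_M.
have C_coef i j z : centralizer A (units_coef e i j z) by apply: units_coef_centralizer.
rewrite /tensor_map raddf_sum exchange_big; apply: eq_bigr => j _.
rewrite raddf_sum; apply: eq_bigr => i _.
rewrite /= adjmxM -(mu_adj _ (C_coef j i x)) -(lam_adj _ (A_units j i)).
by rewrite -(units_coef_adj units_e) units_adj (lam_mu_comm (A_units i j) (C_coef i j _)).
Qed.

Lemma tensor_map_centralizer z : centralizer A z -> tensor_map z = mu z.
Proof.
move=> Cz; rewrite /tensor_map (eq_bigr (fun i => lam (e i i) *m mu z)) => [|i _].
  by rewrite -mulmx_suml -linear_sum /= units_sum1 lam1 mul1mx.
rewrite -(sum_if_eq i (fun j => lam (e i j) *m mu z)); apply: eq_bigr => j _.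
by rewrite (units_coef_id units_e) // eq_sym; case: eqP; rewrite ?linear0 ?mulmx0.
Qed.

Lemma tensor_map1 : tensor_map 1%:M = 1%:M.
Proof. by rewrite tensor_map_centralizer // => z _; rewrite mulmx1 mul1mx. Qed.

Lemma tensor_map_alg a : A a -> tensor_map a = lam a.
Proof.
case=> c _ <-; rewrite !linear_sum; apply: eq_bigr => p _.
rewrite !linear_sum; apply: eq_bigr => q _; rewrite !linearZ /=; congr (_ *: _).
rewrite /tensor_map -(sum_if_eq p (fun i => lam (e i q))); apply: eq_bigr => i _.
rewrite -(sum_if_eq q (fun j => if i == p then lam (e i j) else 0)); apply: eq_bigr => j _.
rewrite (units_coef_units units_e); case: eqP => [->|_]; case: eqP => [->|_] //=.
- by rewrite mu1 mulmx1.
all: by rewrite linear0 mulmx0.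
Qed.

Lemma recon_autE : recon_aut (orth_proj A) L Mm =1 tensor_map.
Proof.
have k_neq0 : (k%:R : C) != 0 by rewrite pnatr_eq0 -lt0n.
move=> x; have := @sum_bilinear_units _ _ _ k_gt0 l_gt0 _ units_e _
  (fun y z => lam y *m mu (z *m x)).
rewrite /= => /(_ _ _)/esym FS; rewrite /recon_aut natrM -scalerA FS; last 2 first.
- by move=> z c y y'; rewrite linearP mulmxDl -scalemxAl.
- by move=> y c z z'; rewrite mulmxDl -scalemxAl linearP mulmxDr -scalemxAr.
rewrite /tensor_map scaler_sumr; apply: eq_bigr => i _; rewrite scaler_sumr; apply: eq_bigr => j _.
rewrite Mm_proj /= (orth_proj_centralizer k_gt0 units_e) app_lin_mx /=.
rewrite (proj_centralizer_units units_e).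
by rewrite linearZ /= -scalemxAr scalerA mulfV ?scale1r.
Qed.

Lemma tensor_map_inner :
  exists u : M, [/\ u *m adjmx u = 1%:M, adjmx u *m u = 1%:M & tensor_map =1 ad u].
Proof.
apply: inner_star_aut; rewrite ?muln_gt0 ?k_gt0 //.
- exact: tensor_mapM.
- exact: tensor_map1.
- exact: tensor_map_adj.
Qed.

End Reconstruction.

Definition centralizer_proj_fun (C : numClosedFieldType) k l (P : 'M[C]_(k * l * (k * l)))
  (x : 'M[C]_(k * l)) : 'M[C]_(k * l) :=
  (l%:R / k%:R) *: \sum_a \sum_b app P (delta_mx a b) *m x *m adjmx (app P (delta_mx a b)).

Fact comm_proj_fun_is_linear (C : numClosedFieldType) k l (P : 'M[C]_(k * l * (k * l))) :
  linear (centralizer_proj_fun P).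
Proof.
move=> c x y; rewrite /centralizer_proj_fun scalerA [c * _]mulrC -[(_ * c) *: _]scalerA -scalerDr.
congr (_ *: _).
rewrite scaler_sumr -big_split; apply: eq_bigr => a _.
rewrite scaler_sumr -big_split; apply: eq_bigr => b _.
by rewrite mulmxDr mulmxDl -scalemxAr -scalemxAl.
Qed.

HB.instance Definition _ (C : numClosedFieldType) k l (P : 'M[C]_(k * l * (k * l))) :=
  GRing.isLinear.Build C _ _ _ (centralizer_proj_fun P) (comm_proj_fun_is_linear P).

Definition ad_proj_fun (C : numClosedFieldType) n (G P : 'M[C]_(n * n)) (x : 'M[C]_n) : 'M[C]_n :=
  \sum_a \sum_b \tr (app G (adjmx (app P (delta_mx a b))) *m x) *: app G (app P (delta_mx a b)).

Fact ad_proj_fun_is_linear (C : numClosedFieldType) n (G P : 'M[C]_(n * n)) :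
  linear (ad_proj_fun G P).
Proof.
move=> c x y; rewrite /ad_proj_fun scaler_sumr -big_split; apply: eq_bigr => a _.
rewrite scaler_sumr -big_split; apply: eq_bigr => b _.
by rewrite mulmxDr -scalemxAr mxtraceD mxtraceZ scalerDl scalerA.
Qed.

HB.instance Definition _ (C : numClosedFieldType) n (G P : 'M[C]_(n * n)) :=
  GRing.isLinear.Build C _ _ _ (ad_proj_fun G P) (ad_proj_fun_is_linear G P).

Section ProjFormulas.
Variables (C : numClosedFieldType) (k l : nat).
Hypotheses (k_gt0 : (0 < k)%N) (l_gt0 : (0 < l)%N).
Local Notation n := (k * l)%N.
Local Notation M := 'M[C]_n.
Local Notation E := 'M[C]_(n * n).
Variable e : 'I_k -> 'I_k -> M.
Hypothesis units_e : matrix_units e.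
Local Notation A := (range (units_hom e)).

Let l_neq0 : (l%:R : C) != 0.
Proof. by rewrite pnatr_eq0 -lt0n. Qed.

Lemma orth_proj_centralizer_of_alg :
  orth_proj (centralizer A) = lin_mx (centralizer_proj_fun (orth_proj A)).
Proof.
rewrite (orth_proj_centralizer k_gt0 units_e); apply: app_inj => x.
rewrite !app_lin_mx /= /proj_centralizer.
have := @sum_bilinear_units _ _ _ k_gt0 l_gt0 _ units_e _ (fun y z => y *m x *m z).
rewrite /= => /(_ _ _) ->; first by rewrite /centralizer_proj_fun scalerA mulrC.
- by move=> z c y y'; rewrite mulmxDl -scalemxAl mulmxDl -scalemxAl.
- by move=> y c z z'; rewrite mulmxDr -scalemxAr.
Qed.

Lemma orth_proj_ad_of_alg u G : u *m adjmx u = 1%:M -> adjmx u *m u = 1%:M -> app G =1 ad u ->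
  orth_proj (ad u @` A) = lin_mx (ad_proj_fun G (orth_proj A)).
Proof.
move=> uu' u'u GE; have [_ _ units_adj] := units_e.
rewrite ad_range_units (orth_proj_alg k_gt0 l_gt0 (ad_units uu' u'u units_e)).
apply: app_inj => x; rewrite !app_lin_mx /=.
have := @sum_bilinear_units _ _ _ k_gt0 l_gt0 _ units_e _
  (fun y z => \tr (app G z *m x) *: app G y).
rewrite /= => /(_ _ _) FS; rewrite /ad_proj_fun -[X in _ = X]scale1r -(mulVf l_neq0) -scalerA -FS.
- rewrite /units_hom scaler_sumr; apply: eq_bigr => i _; rewrite scaler_sumr; apply: eq_bigr => j _.
  by rewrite mxE !GE /hs -ad_adj // units_adj scalerA.
- by move=> z c y y'; rewrite linearP scalerDr !scalerA mulrC.
- by move=> y c z z'; rewrite linearP mulmxDl -scalemxAl mxtraceD mxtraceZ scalerDl scalerA.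
Qed.

End ProjFormulas.

Section ActionGroupoid.
Variables (R : realType) (k l : nat).
Hypotheses (k_gt0 : (0 < k)%N) (l_gt0 : (0 < l)%N).
Local Notation C := (Cx R).
Local Notation n := (k * l)%N.
Local Notation M := 'M[C]_n.
Local Notation E := 'M[C]_(n * n).

Lemma GrP (A : set M) :
  Gr R k l A <-> exists e : 'I_k -> 'I_k -> M, matrix_units e /\ A = range (units_hom e).
Proof.
split=> [[subA [g iso_g]]|[e [units_e ->]]].
  have [A1 _ _ _ _] := subA; have [units_g ->] := star_iso_units A1 iso_g.
  by eexists; split; first exact: units_g.
split; first exact: range_units_subalgebra.
by exists (units_hom e); apply: units_hom_star_iso.
Qed.

Lemma PU_ad g : PU R n g ->
  exists u : M, [/\ u *m adjmx u = 1%:M, adjmx u *m u = 1%:M & app g =1 ad u].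
Proof. by case=> u [uu' u'u gE]; exists u. Qed.

Lemma pu_act_ad g u (A : Obj R n) : app g =1 ad u -> pu_act g A = ad u @` A.
Proof. by move=> gE; apply: eq_imagel => x _; apply: gE. Qed.

Definition hat_of_act (p : E * Obj R n) : MorT R n :=
  (p.2, pu_act p.1 p.2, orth_proj (p.2 : set M) *m p.1,
   orth_proj (centralizer (p.2 : set M)) *m p.1).

Definition act_of_hat (m : MorT R n) : E * Obj R n :=
  (lin_mx (recon_aut (orth_proj (mor_src m : set M)) m.1.2 m.2), mor_src m).

Lemma hat_of_act_mor g A : PU R n g -> Gr R k l A -> HatMor R k l (hat_of_act (g, A)).
Proof.
move=> /PU_ad[u [uu' u'u gE]] /GrP[e [units_e ->]].
have [PA_in _] := orth_proj_algP k_gt0 l_gt0 units_e.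
have [PA'_in _] := orth_proj_centralizerP k_gt0 units_e.
rewrite /HatMor /hat_of_act /= (pu_act_ad _ gE); split.
- by apply/GrP; exists e.
- apply/GrP; exists (fun i j => ad u (e i j)).
  by rewrite ad_range_units //; split=> //; apply: ad_units.
- apply: ad_star_iso => //; first exact: range_units_subalgebra.
  by move=> a Aa; rewrite app_mulmx orth_proj_alg_fix ?gE.
- rewrite -ad_centralizer //; apply: ad_star_iso => //.
    exact: centralizer_units_subalgebra.
  by move=> a Aa; rewrite app_mulmx orth_proj_centralizer_fix ?gE.
- split=> x; rewrite !app_mulmx.
    by rewrite (orth_proj_alg_fix k_gt0 l_gt0 units_e (PA_in x)).
  by rewrite (orth_proj_centralizer_fix k_gt0 units_e (PA'_in x)).
Qed.

Lemma act_of_hat_mor m : HatMor R k l m -> (PU R n `*` Gr R k l) (act_of_hat m).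
Proof.
case: m => [[[A B] L Mm]] [GrA [[B1 _ _ _ _] _] iso_L iso_M [_ Mm_proj]]; split=> //=.
move/GrP: GrA => [e [units_e eA]]; rewrite eA in iso_L iso_M Mm_proj *.
have [u [uu' u'u uE]] := tensor_map_inner k_gt0 l_gt0 units_e B1 iso_L iso_M.
exists u; split=> // x.
by rewrite app_lin_mx /= (recon_autE k_gt0 l_gt0 units_e _ Mm_proj) uE.
Qed.

Lemma act_of_hatK g A : PU R n g -> Gr R k l A -> act_of_hat (hat_of_act (g, A)) = (g, A).
Proof.
move=> PUg GrA; have := hat_of_act_mor PUg GrA.
move: PUg GrA => /PU_ad[u [uu' u'u gE]] /GrP[e [units_e eA]].
rewrite /HatMor /hat_of_act /act_of_hat /= => -[_ [[B1 _ _ _ _] _] iso_L iso_M [_ Mm_proj]].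
congr pair; apply: app_inj => x; rewrite app_lin_mx /=.
rewrite eA in iso_L iso_M Mm_proj *.
rewrite (recon_autE k_gt0 l_gt0 units_e _ Mm_proj) /tensor_map.
rewrite -[in RHS](sum_units_coef units_e x) !linear_sum; apply: eq_bigr => i _.
rewrite linear_sum; apply: eq_bigr => j _ /=.
rewrite !app_mulmx (orth_proj_alg_fix k_gt0 l_gt0 units_e (units_in_range e i j)).
by rewrite (orth_proj_centralizer_fix k_gt0 units_e (units_coef_centralizer units_e i j x)) !gE adM.
Qed.

Lemma hat_of_actK m : HatMor R k l m -> hat_of_act (act_of_hat m) = m.
Proof.
case: m => [[[A B] L Mm]] [GrA [[B1 _ _ _ _] _] iso_L iso_M [L_proj Mm_proj]].
move/GrP: GrA => [e [units_e eA]]; rewrite eA in iso_L iso_M L_proj Mm_proj *.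
have GE : app (lin_mx (recon_aut (orth_proj (range (units_hom e))) L Mm)) =1 tensor_map e L Mm.
  by move=> x; rewrite app_lin_mx /= (recon_autE k_gt0 l_gt0 units_e _ Mm_proj).
have [PA_in _] := orth_proj_algP k_gt0 l_gt0 units_e.
have [PA'_in _] := orth_proj_centralizerP k_gt0 units_e.
rewrite /hat_of_act /act_of_hat /mor_src /=; congr (_, _, _, _).
- rewrite /pu_act (eq_imagel (fun a Aa => etrans (GE a) (tensor_map_alg units_e L iso_M Aa))).
  have [[lamB _ lam_onto] _ _ _ _] := iso_L.
  by apply/seteqP; split=> [_ [a Aa <-]|b /lam_onto//]; apply: lamB.
- apply: app_inj => x; rewrite app_mulmx GE (tensor_map_alg units_e _ iso_M (PA_in x)).
  by rewrite [RHS]L_proj.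
- apply: app_inj => x; rewrite app_mulmx GE (tensor_map_centralizer units_e _ B1 iso_L (PA'_in x)).
  by rewrite [RHS]Mm_proj.
Qed.

Lemma hat_of_act_comp g h A : PU R n g -> PU R n h -> Gr R k l A ->
  hat_of_act (pu_mul g h, A) = hat_comp (hat_of_act (g, pu_act h A)) (hat_of_act (h, A)).
Proof.
move=> _ /PU_ad[u [uu' u'u hE]] /GrP[e [units_e ->]].
have units_ue := ad_units uu' u'u units_e.
have hA : pu_act h (range (units_hom e)) = range (units_hom (fun i j => ad u (e i j))).
  by rewrite (pu_act_ad _ hE) ad_range_units.
have [PA_in _] := orth_proj_algP k_gt0 l_gt0 units_e.
have [PA'_in _] := orth_proj_centralizerP k_gt0 units_e.
rewrite /hat_of_act /hat_comp /mor_src /mor_tgt /pu_mul /=; congr (_, _, _, _).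
- by rewrite /pu_act image_comp; apply: eq_imagel => x _; rewrite app_mulmx.
- apply: app_inj => x; rewrite !app_mulmx hA orth_proj_alg_fix //.
  by rewrite -hA; exists (app (orth_proj (range (units_hom e))) x).
- apply: app_inj => x; rewrite !app_mulmx hA orth_proj_centralizer_fix //.
  rewrite -hA (pu_act_ad _ hE) -ad_centralizer // -(pu_act_ad _ hE).
  by exists (app (orth_proj (centralizer (range (units_hom e)))) x).
Qed.

End ActionGroupoid.

Section MatrixLimits.
Variables (C : numClosedFieldType) (T : Type) (F : set_system T).
Hypothesis FF : Filter F.

Lemma cvg_mxP m n (f : T -> 'M[C]_(m, n)) (A : 'M[C]_(m, n)) :
  f @ F --> A <-> forall i j, (fun t => f t i j) @ F --> A i j.
Proof.
split=> [fA i j B /= AijB|fA B [P AP PB] /=].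
  suff /fA : nbhs A [set N : 'M[C]_(m, n) | B (N i j)] by [].
  exists (fun i' j' => if (i' == i) && (j' == j) then B else setT).
    by move=> i' j'; case: ifP => [/andP[/eqP-> /eqP->]//|_]; apply: filterT.
  by move=> N /(_ i j); rewrite !eqxx.
have : \forall t \near F, forall ij : 'I_m * 'I_n, P ij.1 ij.2 (f t ij.1 ij.2).
  by apply: filter_forall => ij; apply: fA (AP ij.1 ij.2).
by apply: filterS => t Pft; apply: PB => i j; apply: (Pft (i, j)).
Qed.

Lemma cvg_sumr (V : normedModType C) I (r : seq I) (P : pred I) (f : I -> T -> V) (a : I -> V) :
  (forall i, P i -> f i @ F --> a i) ->
  (fun t => \sum_(i <- r | P i) f i t) @ F --> \sum_(i <- r | P i) a i.
Proof. by apply: cvg_big => //; apply: add_continuous. Qed.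

Lemma cvg_conj (f : T -> C) (a : C) : f @ F --> a -> (fun t => (f t)^*) @ F --> a^*.
Proof.
move=> /cvgrPdist_lt fa; apply/cvgrPdist_lt => eps /fa.
by apply: filterS => t; rewrite -rmorphB /= norm_conjC.
Qed.

Lemma cvg_mulmx m n p (f : T -> 'M[C]_(m, n)) (g : T -> 'M[C]_(n, p))
  (A : 'M[C]_(m, n)) (B : 'M[C]_(n, p)) :
  f @ F --> A -> g @ F --> B -> (fun t => f t *m g t) @ F --> A *m B.
Proof.
move=> /cvg_mxP fA /cvg_mxP gB; apply/cvg_mxP => i j.
under eq_fun do rewrite mxE; rewrite mxE.
by apply: cvg_sumr => s _; apply: cvgM; [apply: fA|apply: gB].
Qed.

Lemma cvg_adjmx m n (f : T -> 'M[C]_(m, n)) (A : 'M[C]_(m, n)) :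
  f @ F --> A -> (fun t => adjmx (f t)) @ F --> adjmx A.
Proof.
move=> /cvg_mxP fA; apply/cvg_mxP => i j.
by under eq_fun do rewrite adjmxE; rewrite adjmxE; apply: cvg_conj.
Qed.

Lemma cvg_mxtrace n (f : T -> 'M[C]_n) (A : 'M[C]_n) :
  f @ F --> A -> (fun t => \tr (f t)) @ F --> \tr A.
Proof. by move=> /cvg_mxP fA; apply: cvg_sumr => i _; apply: fA. Qed.

Lemma cvg_mxvec m n (f : T -> 'M[C]_(m, n)) (A : 'M[C]_(m, n)) :
  f @ F --> A -> (fun t => mxvec (f t)) @ F --> mxvec A.
Proof.
move=> /cvg_mxP fA; apply/cvg_mxP => i j; rewrite (ord1 i).
by case: (mxvec_indexP j) => a b; under eq_fun do rewrite mxvecE; rewrite mxvecE; apply: fA.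
Qed.

Lemma cvg_vec_mx m n (f : T -> 'rV[C]_(m * n)) (A : 'rV[C]_(m * n)) :
  f @ F --> A -> (fun t => vec_mx (f t)) @ F --> (vec_mx A : 'M_(m, n)).
Proof.
move=> /cvg_mxP fA; apply/cvg_mxP => i j.
by under eq_fun do rewrite mxE; rewrite mxE; apply: fA.
Qed.

Lemma cvg_app n (P : T -> 'M[C]_(n * n)) (x : T -> 'M[C]_n) (P0 : 'M[C]_(n * n)) (x0 : 'M[C]_n) :
  P @ F --> P0 -> x @ F --> x0 -> (fun t => app (P t) (x t)) @ F --> app P0 x0.
Proof. by move=> PP0 xx0; apply/cvg_vec_mx/cvg_mulmx/PP0/cvg_mxvec. Qed.

Lemma cvg_lin_mx n (h : T -> 'M[C]_n -> 'M[C]_n) (h0 : 'M[C]_n -> 'M[C]_n) :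
  (forall y, (fun t => h t y) @ F --> h0 y) -> (fun t => lin_mx (h t)) @ F --> lin_mx h0.
Proof.
move=> hh0; apply/cvg_mxP => i j; rewrite /lin_mx.
under eq_fun do rewrite mxE; rewrite mxE /=.
by have /cvg_mxvec/cvg_mxP := hh0 (vec_mx (delta_mx 0 i)); apply.
Qed.

End MatrixLimits.

Section Continuity.
Variables (R : realType) (k l : nat).
Hypotheses (k_gt0 : (0 < k)%N) (l_gt0 : (0 < l)%N).
Local Notation C := (Cx R).
Local Notation n := (k * l)%N.
Local Notation M := 'M[C]_n.
Local Notation E := 'M[C]_(n * n).

Section Limits.
Variables (T : Type) (F : set_system T).
Hypothesis FF : Filter F.

Lemma cvg_fst_map (X Y : topologicalType) (f : T -> X * Y) (p : X * Y) :
  f @ F --> p -> (fun t => (f t).1) @ F --> p.1.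
Proof. exact: continuous_cvg _ cvg_fst. Qed.

Lemma cvg_snd_map (X Y : topologicalType) (f : T -> X * Y) (p : X * Y) :
  f @ F --> p -> (fun t => (f t).2) @ F --> p.2.
Proof. exact: continuous_cvg _ cvg_snd. Qed.

Lemma cvg_orth_proj (f : T -> Obj R n) (A : Obj R n) :
  f @ F --> A -> (fun t => orth_proj (f t : set M)) @ F --> orth_proj (A : set M).
Proof. exact: continuous_cvg _ (@initial_continuous _ _ _ A). Qed.

Lemma cvg_recon_aut (P L Mm : T -> E) (P0 L0 M0 : E) :
  P @ F --> P0 -> L @ F --> L0 -> Mm @ F --> M0 ->
  (fun t => lin_mx (recon_aut (P t) (L t) (Mm t))) @ F --> lin_mx (recon_aut P0 L0 M0).
Proof.
move=> PP0 LL0 MM0; apply: cvg_lin_mx => y; apply: cvgZ; first exact: cvg_cst.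
apply: cvg_sumr => a _; apply: cvg_sumr => b _; apply: cvg_mulmx.
  by apply: cvg_app => //; apply: cvg_app => //; apply: cvg_cst.
apply: cvg_app => //; apply: cvg_mulmx; last exact: cvg_cst.
by apply: cvg_adjmx; apply: cvg_app => //; apply: cvg_cst.
Qed.

Lemma cvg_centralizer_proj (P : T -> E) (P0 : E) :
  P @ F --> P0 ->
  (fun t => lin_mx (centralizer_proj_fun (P t))) @ F --> lin_mx (centralizer_proj_fun P0).
Proof.
move=> PP0; apply: cvg_lin_mx => y; apply: cvgZ; first exact: cvg_cst.
apply: cvg_sumr => a _; apply: cvg_sumr => b _; apply: cvg_mulmx.
  by apply: cvg_mulmx; [apply: cvg_app => //; apply: cvg_cst|apply: cvg_cst].
by apply: cvg_adjmx; apply: cvg_app => //; apply: cvg_cst.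
Qed.

Lemma cvg_ad_proj (G P : T -> E) (G0 P0 : E) : G @ F --> G0 -> P @ F --> P0 ->
  (fun t => lin_mx (ad_proj_fun (G t) (P t))) @ F --> lin_mx (ad_proj_fun G0 P0).
Proof.
move=> GG0 PP0; apply: cvg_lin_mx => y.
apply: cvg_sumr => a _; apply: cvg_sumr => b _; apply: cvgZ.
  apply: cvg_mxtrace; apply: cvg_mulmx; last exact: cvg_cst.
  by apply: cvg_app => //; apply: cvg_adjmx; apply: cvg_app => //; apply: cvg_cst.
by apply: cvg_app => //; apply: cvg_app => //; apply: cvg_cst.
Qed.

End Limits.

Lemma act_of_hat_continuous : continuous (@act_of_hat R k l).
Proof.
move=> m; apply: (@cvg_pair _ _ _ _ (nbhs _) (nbhs _)); last first.
  by do 3 apply: cvg_fst_map; apply: cvg_id.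
apply: cvg_recon_aut.
- by apply: cvg_orth_proj; do 3 apply: cvg_fst_map; apply: cvg_id.
- by apply: cvg_snd_map; apply: cvg_fst_map; apply: cvg_id.
- by apply: cvg_snd_map; apply: cvg_id.
Qed.

Lemma hat_of_act_continuous :
  {within PU R n `*` Gr R k l, continuous (@hat_of_act R k l)}.
Proof.
set D := PU R n `*` Gr R k l.
have cvg_proj1 (p : E * Obj R n) : (fun q : E * Obj R n => q.1) @ p --> p.1.
  by apply: cvg_fst_map; apply: cvg_id.
have cvg_proj2 (p : E * Obj R n) : (fun q : E * Obj R n => q.2) @ p --> p.2.
  by apply: cvg_snd_map; apply: cvg_id.
have tgt_cont : {within D, continuous (fun p : E * Obj R n => pu_act p.1 p.2)}.
  apply: (@continuous_comp_initial _ _ _ (@orth_proj C n)).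
  apply: (@subspace_eq_continuous _ D _
    (fun p : E * Obj R n => lin_mx (ad_proj_fun p.1 (orth_proj (p.2 : set M))))).
    move=> [g A] /set_mem[/= /PU_ad[u [uu' u'u gE]] /(GrP k_gt0 l_gt0)[e [units_e ->]]].
    rewrite /from_subspace /= (pu_act_ad _ gE).
    by rewrite (orth_proj_ad_of_alg k_gt0 l_gt0 units_e uu' u'u gE).
  apply: continuous_subspaceT => p; apply: cvg_ad_proj; first exact: cvg_proj1.
  by apply: cvg_orth_proj; apply: cvg_proj2.
have L_cont : {within D, continuous (fun p : E * Obj R n => orth_proj (p.2 : set M) *m p.1)}.
  apply: continuous_subspaceT => p; apply: cvg_mulmx; last exact: cvg_proj1.
  by apply: cvg_orth_proj; apply: cvg_proj2.
have M_cont : {within D, continuous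
    (fun p : E * Obj R n => orth_proj (centralizer (p.2 : set M)) *m p.1)}.
  apply: (@subspace_eq_continuous _ D _
    (fun p : E * Obj R n => lin_mx (centralizer_proj_fun (orth_proj (p.2 : set M))) *m p.1)).
    move=> [g A] /set_mem[/= _ /(GrP k_gt0 l_gt0)[e [units_e ->]]].
    by rewrite /from_subspace /= (orth_proj_centralizer_of_alg k_gt0 l_gt0 units_e).
  apply: continuous_subspaceT => p; apply: cvg_mulmx; last exact: cvg_proj1.
  by apply: cvg_centralizer_proj; apply: cvg_orth_proj; apply: cvg_proj2.
move=> p; rewrite /hat_of_act /from_subspace.
apply: (@cvg_pair _ _ _ _ (nbhs _) (nbhs _)); last exact: M_cont.
apply: (@cvg_pair _ _ _ _ (nbhs _) (nbhs _)); last exact: L_cont.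
apply: (@cvg_pair _ _ _ _ (nbhs _) (nbhs _)); last exact: tgt_cont.
by apply: continuous_subspaceT => q; apply: cvg_proj2.
Qed.

End Continuity.

Theorem mainTheorem4 (R : realType) (k l : nat) (hk : (0 < k)%N) (hl : (0 < l)%N) :
  exists (Phi : 'M[Cx R]_((k * l) * (k * l)) * Obj R (k * l) -> MorT R (k * l))
         (Psi : MorT R (k * l) -> 'M[Cx R]_((k * l) * (k * l)) * Obj R (k * l)),
    [/\ [/\ set_fun (PU R (k * l) `*` Gr R k l) (HatMor R k l) Phi,
            set_fun (HatMor R k l) (PU R (k * l) `*` Gr R k l) Psi,
            (forall p, (PU R (k * l) `*` Gr R k l) p -> Psi (Phi p) = p) &
            (forall m, HatMor R k l m -> Phi (Psi m) = m)],
        {within PU R (k * l) `*` Gr R k l, continuous Phi},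
        {within HatMor R k l, continuous Psi} &
        [/\ (forall g A, PU R (k * l) g -> Gr R k l A ->
               mor_src (Phi (g, A)) = A /\ mor_tgt (Phi (g, A)) = pu_act g A) &
            (forall g h A, PU R (k * l) g -> PU R (k * l) h -> Gr R k l A ->
               Phi (pu_mul g h, A) = hat_comp (Phi (g, pu_act h A)) (Phi (h, A)))]].
Proof.
exists (@hat_of_act R k l), (@act_of_hat R k l); split.
- split=> [[g A] []|m|[g A] []|m].
  + exact: hat_of_act_mor.
  + exact: act_of_hat_mor.
  + exact: act_of_hatK.
  + exact: hat_of_actK.
- exact: hat_of_act_continuous.
- exact: continuous_subspaceT (@act_of_hat_continuous R k l).
- by split=> // g h A; apply: hat_of_act_comp.
Qed.
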